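(* Let $f:\mathbb{R}^m\to\mathbb{R}^n$ be a ReLU network with $l$ hidden layers and $N$ neurons in total, and let $\mathrm{code}_f:\mathbb{R}^m\to\{0,1\}^N$ be its ReLU code map. For $\vec x,\vec y\in\mathbb{R}^m$ define $\vec x\sim_f\vec y$ iff $d_{\mathrm H}(\mathrm{code}_f(\vec x),\mathrm{code}_f(\vec y))=0$, and let $[\vec x]_f=\{\vec z\in\mathbb{R}^m\mid \vec z\sim_f\vec x\}$ denote the equivalence classes. Then: (1) There is a one-to-one correspondence between the code space $\mathcal{X}_f=\{\mathrm{code}_f(\vec x)\mid \vec x\in\mathbb{R}^m\}$ and the set of equivalence classes $\{[\vec x]_f\mid \vec x\in\mathbb{R}^m\}$. (2) For every $\vec x\in\mathbb{R}^m$, the topological closure $\overline{[\vec x]_f}$ of $[\vec x]_f$ is a polyhedron, i.e. the intersection of a finite number of closed half-spaces (or all of $\mathbb{R}^m$). (3) For every $\vec x\in\mathbb{R}^m$, the equivalence class $[\vec x]_f$ is the disjoint union of the relative interiors $\mathrm{relint}(F)$ of faces $F$ of the polyhedron $P=\overline{[\vec x]_f}$, and these relative interiors form a lattice structure (with $\mathrm{relint}(F_1)\prec\mathrm{relint}(F_2)$ iff $F_1\subseteq F_2$, inherited from the face lattice of $P$ ordered by inclusion).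
   Context: A ReLU network is a function $f(\vec x)=\xi\circ\mathrm{relu}\circ g_l\circ\cdots\circ\mathrm{relu}\circ g_1(\vec x)$, where $\mathrm{relu}(z)=\max\{0,z\}$ is applied componentwise, $\xi$ is an output function, and each $g_k:\mathbb{R}^{n_{k-1}}\to\mathbb{R}^{n_k}$ ($n_0=m$) is affine, $g_k(\vec x)=W_k\vec x+\vec b_k$. The total number of neurons is $N=\sum_{k=1}^l n_k$. The activation vector at layer $k$ is $\vec a_k(\vec x)=(a^{(k)}_1(\vec x),\dots,a^{(k)}_{n_k}(\vec x))=\mathrm{relu}\circ g_k\circ\cdots\circ\mathrm{relu}\circ g_1(\vec x)$. The ReLU code of $\vec x$ is $\mathrm{code}_f(\vec x)=(\beta^{(1)}_1,\dots,\beta^{(1)}_{n_1},\dots,\beta^{(l)}_1,\dots,\beta^{(l)}_{n_l})\in\{0,1\}^N$ with $\beta^{(k)}_i=1$ if $a^{(k)}_i(\vec x)>0$ and $\beta^{(k)}_i=0$ otherwise. $d_{\mathrm H}(a,b)=|\{j\in\{1,\dots,N\}\mid a_j\neq b_j\}|$ is the Hamming distance on $\{0,1\}^N$. For a convex set $F$, $\mathrm{relint}(F)$ is its interior relative to its affine hull. *)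

From HB Require Import structures.
From mathcomp Require Import all_boot all_order all_algebra.
From mathcomp Require Import all_classical all_reals topology normedtype.
Set Implicit Arguments. Unset Strict Implicit. Unset Printing Implicit Defensive.
Import Order.TTheory GRing.Theory Num.Theory numFieldNormedType.Exports.
Local Open Scope ring_scope.
Local Open Scope classical_set_scope.

Section ReLU.
Variable R : realType.

(* A ReLU network with input dimension n (index) and output dimension p.
   NetLayer W b g : first apply x |-> relu (W x + b) (hidden layer of width k),
   then the rest g. *)
Inductive relu_net (p : nat) : nat -> Type :=
| NetOut : forall n, ('cV[R]_n -> 'cV[R]_p) -> relu_net p n
| NetLayer : forall n k, 'M[R]_(k, n) -> 'cV[R]_k -> relu_net p k -> relu_net p n.

Definition relu (z : R) : R := Num.max 0 z.

Fixpoint neurons p n (f : relu_net p n) : nat :=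
  match f with
  | NetOut _ _ => 0%N
  | NetLayer _ k _ _ g => (k + neurons g)%N
  end.

Fixpoint net_eval p n (f : relu_net p n) : 'cV[R]_n -> 'cV[R]_p :=
  match f in relu_net _ n0 return 'cV[R]_n0 -> 'cV[R]_p with
  | NetOut _ xi => xi
  | NetLayer _ _ W b g => fun x => net_eval g (map_mx relu (W *m x + b))
  end.

Fixpoint relu_code p n (f : relu_net p n) : 'cV[R]_n -> seq bool :=
  match f in relu_net _ n0 return 'cV[R]_n0 -> seq bool with
  | NetOut _ _ => fun _ => [::]
  | NetLayer _ k W b g => fun x =>
      let a := map_mx relu (W *m x + b) in
      [seq (0 < a i 0) | i <- enum 'I_k] ++ relu_code g a
  end.

Definition hamming (N : nat) (u v : seq bool) : nat :=
  #|[set j : 'I_N | nth false u j != nth false v j]|.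

Definition relu_equiv p m (f : relu_net p m) (x y : 'cV[R]_m) : Prop :=
  hamming (neurons f) (relu_code f x) (relu_code f y) = 0%N.

Definition relu_class p m (f : relu_net p m) (x : 'cV[R]_m) : set 'cV[R]_m :=
  [set z | relu_equiv f z x].

Definition dotv m (a z : 'cV[R]_m) : R := \sum_(i < m) a i 0 * z i 0.

Definition polyhedron m (P : set 'cV[R]_m) : Prop :=
  exists s : seq ('cV[R]_m * R),
    (forall h, h \in s -> h.1 != 0) /\
    P = [set z | forall h, h \in s -> dotv h.1 z <= h.2].

(* faces of a convex set P: intersections of P with supporting hyperplanes
   (a = 0 allowed, giving P itself and the empty face) *)
Definition face m (P F : set 'cV[R]_m) : Prop :=
  exists (a : 'cV[R]_m) (beta : R),
    (forall z, P z -> dotv a z <= beta) /\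
    F = P `&` [set z | dotv a z = beta].

Definition aff_hull m (F : set 'cV[R]_m) : set 'cV[R]_m :=
  [set z | exists s : seq ('cV[R]_m * R),
     (forall h, h \in s -> F h.1) /\ \sum_(h <- s) h.2 = 1 /\
     z = \sum_(h <- s) h.2 *: h.1].

Definition relint m (F : set 'cV[R]_m) : set 'cV[R]_m :=
  [set z | F z /\ exists e : R, 0 < e /\
     (forall y, aff_hull F y -> ball z e y -> F y)].

End ReLU.

From HB Require Import structures.
From mathcomp Require Import all_boot all_order all_algebra.
From mathcomp Require Import all_classical all_reals topology normedtype.
From mathcomp Require Import ring lra.
Set Implicit Arguments.
Unset Strict Implicit.
Unset Printing Implicit Defensive.
Import Order.TTheory GRing.Theory Num.Theory numFieldNormedType.Exports.
Local Open Scope ring_scope.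
Local Open Scope classical_set_scope.

(* On the set of inputs sharing the ReLU code of x, each layer acts as a fixed
   affine map: the ReLUs become the 0/1 diagonal matrix of the code.  Hence the
   class of x is cut out by finitely many linear inequalities, strict for the
   active neurons and non-strict for the others, all pulled back to the input.
   The closure of such a nonempty set is the polyhedron P obtained by relaxing
   the strict inequalities.  Every solution z lies in the relative interior of
   the smallest face of P containing it, which consists of the points of P that
   are tight wherever z is; these faces have disjoint relative interiors, their
   join is the face of a midpoint, and their meet is the face of a common
   solution with the fewest tight constraints. *)

Lemma count_predI_subpred (T : eqType) (a b : pred T) (r : seq T) :
  (count a r <= count (predI a b) r)%N -> {in r, forall x, a x -> b x}.
Proof.
move=> le_ab; have: all b [seq x <- r | a x].
  rewrite all_count eqn_leq count_size size_filter count_filter /=.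
  by rewrite (@eq_count _ (predI b a) (predI a b)) // => x /=; rewrite andbC.
by rewrite all_filter => /allP ab x /ab /implyP.
Qed.

Lemma near_all_in {T : eqType} {U : topologicalType} (x : U)
    (r : seq T) (Q : T -> U -> Prop) :
  (forall c, c \in r -> \forall y \near x, Q c y) ->
  \forall y \near x, forall c, c \in r -> Q c y.
Proof.
elim: r => [|c r IH] Qr; first by apply: nearW => y c.
have Fr : \forall y \near x, forall d, d \in r -> Q d y.
  by apply: IH => d dr; apply: Qr; rewrite inE dr orbT.
apply: filterS (filterI (Qr c (mem_head c r)) Fr) => y [Qc Qy] d.
by rewrite inE => /predU1P[-> | /Qy].
Qed.

Lemma exists_argmin_nat T (S : set T) (mu : T -> nat) :
  S !=set0 -> exists2 v, S v & forall w, S w -> (mu v <= mu w)%N.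
Proof.
move=> [v0 Sv0]; pose Smu n := `[< exists2 v, S v & mu v = n >].
have [|n /asboolP [v Sv <-] nmin] := ex_minnP (ex_intro Smu (mu v0) _).
  by apply/asboolP; exists v0.
by exists v => // w Sw; apply: nmin; apply/asboolP; exists w.
Qed.

Section DotProduct.
Variables (R : realType) (m : nat).
Local Notation V := 'cV[R]_m.

Lemma dotvE (a z : V) : dotv a z = (a^T *m z) 0 0.
Proof. by rewrite /dotv mxE; apply: eq_bigr => i _; rewrite mxE. Qed.

Lemma dotvC (a z : V) : dotv a z = dotv z a.
Proof. by apply: eq_bigr => i _; rewrite mulrC. Qed.

Lemma dotvDr (a u v : V) : dotv a (u + v) = dotv a u + dotv a v.
Proof. by rewrite !dotvE mulmxDr mxE. Qed.

Lemma dotvZr (a v : V) k : dotv a (k *: v) = k * dotv a v.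
Proof. by rewrite !dotvE -scalemxAr mxE. Qed.

Lemma dotvNl (a v : V) : dotv (- a) v = - dotv a v.
Proof. by rewrite !dotvE linearN mulNmx mxE. Qed.

Lemma dotv0l (v : V) : dotv 0 v = 0.
Proof. by rewrite dotvE linear0 mul0mx mxE. Qed.

Lemma dotv_sumr I (r : seq I) (P : pred I) (F : I -> V) a :
  dotv a (\sum_(i <- r | P i) F i) = \sum_(i <- r | P i) dotv a (F i).
Proof. by rewrite dotvE mulmx_sumr summxE; apply: eq_bigr => i _; rewrite dotvE. Qed.

Lemma dotv_suml I (r : seq I) (P : pred I) (F : I -> V) v :
  dotv (\sum_(i <- r | P i) F i) v = \sum_(i <- r | P i) dotv (F i) v.
Proof. by rewrite dotvC dotv_sumr; apply: eq_bigr => i _; exact: dotvC. Qed.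

Lemma dotv_delta (i : 'I_m) (z : V) : dotv (delta_mx i 0) z = z i 0.
Proof. by rewrite dotvE trmx_delta -rowE mxE. Qed.

Lemma dotv_continuous (a : V) : continuous (dotv a).
Proof.
rewrite /dotv; elim: (index_enum _) => [|i r IH] z.
  by under eq_fun do rewrite big_nil; exact: cst_continuous.
under eq_fun do rewrite big_cons.
by apply: (cvgD _ (IH z)); apply: cvgMl_tmp; exact: coord_continuous.
Qed.

End DotProduct.

Lemma dotv_mulmx (R : realType) k m (A : 'M[R]_(k, m)) (a : 'cV[R]_k) (z : 'cV[R]_m) :
  dotv a (A *m z) = dotv (A^T *m a) z.
Proof. by rewrite !dotvE trmx_mul trmxK mulmxA. Qed.

Section ConvexGeometry.
Variables (R : realType) (m : nat).
Local Notation V := 'cV[R]_m.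

Lemma face_set0 (P : set V) : face P set0.
Proof.
exists 0, 1; split=> [w _|]; first by rewrite dotv0l.
by apply/seteqP; split=> w //= [_]; rewrite dotv0l => /eqP; rewrite eq_sym oner_eq0.
Qed.

Lemma relint_set0 : relint (set0 : set V) = set0.
Proof. by apply/seteqP; split=> y // [[]]. Qed.

Lemma aff_hull_const (F : set V) a b :
  (forall w, F w -> dotv a w = b) -> forall y, aff_hull F y -> dotv a y = b.
Proof.
move=> Fb _ [l [Fl [l1 ->]]].
rewrite dotv_sumr big_seq (eq_bigr (fun h => h.2 * b)) -?big_seq.
  by rewrite -mulr_suml l1 mul1r.
by move=> h hl; rewrite dotvZr Fb //; exact: Fl.
Qed.

(* For small t > 0 the point y + t (y - w) stays in F, which forces a.w >= b. *)
Lemma relint_argmax (F : set V) a b y :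
  (forall w, F w -> dotv a w <= b) -> relint F y -> dotv a y = b ->
  forall w, F w -> dotv a w = b.
Proof.
move=> Fb [Fy [e [e0 Fball]]] ayb w Fw; apply/eqP; rewrite eq_le Fb //=.
pose d := `|y - w|; have d0 : 0 <= d := normr_ge0 _.
pose t := e / (d + 1); have t0 : 0 < t by rewrite divr_gt0 // ltr_wpDl.
pose q := (1 + t) *: y + (- t) *: w.
have Aq : aff_hull F q.
  exists [:: (y, 1 + t); (w, - t)]; split.
    by move=> h; rewrite !inE => /orP[/eqP-> | /eqP->].
  by rewrite !big_cons !big_nil /= !addr0 addrK.
have Bq : ball y e q.
  rewrite -ball_normE /=.
  have -> : y - q = t *: (w - y).
    by rewrite /q scalerDl scale1r scalerBr scaleNr !opprD opprK !addrA subrr add0r addrC.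
  rewrite normrZ gtr0_norm // distrC -/d /t mulrAC.
  by rewrite ltr_pdivrMr ?ltr_wpDl // ltr_pM2l // ltrDl.
by have := Fb q (Fball q Aq Bq); rewrite /q dotvDr !dotvZr ayb; nra.
Qed.

End ConvexGeometry.

Section LinearSystems.
Variables (R : realType) (m : nat).
Local Notation V := 'cV[R]_m.

(* (a, b, true) encodes a.z < b and (a, b, false) encodes a.z <= b. *)
Definition constraint := (V * R * bool)%type.

Definition holds (c : constraint) (z : V) : bool :=
  if c.2 then dotv c.1.1 z < c.1.2 else dotv c.1.1 z <= c.1.2.
Definition weakly_holds (c : constraint) (z : V) : bool := dotv c.1.1 z <= c.1.2.
Definition tight (c : constraint) (z : V) : bool := dotv c.1.1 z == c.1.2.

Definition sol (s : seq constraint) : set V := [set z | all (holds^~ z) s].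
Definition wsol (s : seq constraint) : set V := [set z | all (weakly_holds^~ z) s].

Lemma holds_weakly c z : holds c z -> weakly_holds c z.
Proof. by rewrite /holds /weakly_holds; case: c.2 => // /ltW. Qed.

Lemma sol_wsol s : sol s `<=` wsol s.
Proof. by move=> z /allP sz; apply/allP => c /sz /holds_weakly. Qed.

Definition lerp (t : R) (u v : V) : V := (1 - t) *: u + t *: v.

Lemma dotv_lerp a t u v : dotv a (lerp t u v) = (1 - t) * dotv a u + t * dotv a v.
Proof. by rewrite dotvDr !dotvZr. Qed.

Lemma holds_lerp c t u v :
  0 < t <= 1 -> weakly_holds c u -> holds c v -> holds c (lerp t u v).
Proof.
rewrite /holds /weakly_holds dotv_lerp => /andP[t0 t1].
by case: c.2 => hu hv; nra.
Qed.

Lemma weakly_holds_lerp c t u v :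
  0 <= t <= 1 -> weakly_holds c u -> weakly_holds c v -> weakly_holds c (lerp t u v).
Proof. rewrite /weakly_holds dotv_lerp => /andP[t0 t1] hu hv; nra. Qed.

Lemma tight_lerp c t u v : 0 < t < 1 -> weakly_holds c u -> weakly_holds c v ->
  tight c (lerp t u v) = tight c u && tight c v.
Proof.
rewrite /tight /weakly_holds dotv_lerp => /andP[t0 t1] hu hv.
apply/eqP/andP => [h | [/eqP-> /eqP->]]; last by ring.
by split; apply/eqP; nra.
Qed.

Lemma sol_lerp s t u v : 0 < t <= 1 -> wsol s u -> sol s v -> sol s (lerp t u v).
Proof.
move=> t01 /allP su /allP sv; apply/allP => c cs.
by apply: holds_lerp; [exact: t01 | exact: su | exact: sv].
Qed.

Lemma wsol_lerp s t u v : 0 <= t <= 1 -> wsol s u -> wsol s v -> wsol s (lerp t u v).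
Proof.
move=> t01 /allP su /allP sv; apply/allP => c cs.
by apply: weakly_holds_lerp; [exact: t01 | exact: su | exact: sv].
Qed.

Lemma sol_cat s1 s2 z : sol (s1 ++ s2) z <-> sol s1 z /\ sol s2 z.
Proof. by rewrite /sol /= all_cat; split=> [/andP | /andP]. Qed.

Lemma closed_wsol s : closed (wsol s).
Proof.
have -> : wsol s = \bigcap_(c in [set c | c \in s]) (dotv c.1.1 @^-1` [set t | t <= c.1.2]).
  by apply/seteqP; split=> z; [move=> /allP sz c /sz | move=> sz; apply/allP => c /sz].
apply: closed_bigI => c _; apply: preimage_closed; last exact: closed_le.
by move=> z _; exact: dotv_continuous.
Qed.

Lemma closure_sol s x0 : sol s x0 -> closure (sol s) = wsol s.
Proof.
move=> sx0; apply/seteqP; split.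
  exact: subset_trans (closureS (@sol_wsol s)) (@closed_wsol s).
move=> w ww B /nbhs_ballP [e e0 wB]; pose d := `|w - x0|.
pose t := e / (d + e); have de0 : 0 < d + e := ltr_wpDl (normr_ge0 _) e0.
have t0 : 0 < t by rewrite divr_gt0.
have t1 : t <= 1 by rewrite ler_pdivrMr // mul1r lerDr normr_ge0.
exists (lerp t w x0); split; first by apply: sol_lerp; rewrite ?t0.
apply: wB; rewrite -ball_normE /=.
have -> : w - lerp t w x0 = t *: (w - x0).
  by rewrite /lerp scalerBl scale1r scalerBr opprD opprB addrA addrCA subrr addr0.
rewrite normrZ gtr0_norm // -/d /t mulrAC ltr_pdivrMr //.
by rewrite ltr_pM2l // ltrDl.
Qed.

Lemma wsol_polyhedron s : wsol s !=set0 -> polyhedron (wsol s).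
Proof.
move=> [x0 /allP sx0]; exists [seq c.1 | c <- s & c.1.1 != 0]; split.
  by move=> h /mapP [c]; rewrite mem_filter => /andP[a0 _] ->.
apply/seteqP; split=> z.
  by move=> /allP sz h /mapP [c]; rewrite mem_filter => /andP[_ /sz] ? ->.
move=> sz; apply/allP => c cs; have [a0 | a0] := eqVneq c.1.1 0.
  by have := sx0 c cs; rewrite /weakly_holds a0 !dotv0l.
by apply: sz; apply/mapP; exists c; rewrite // mem_filter a0.
Qed.

End LinearSystems.

Section MinimalFaces.
Variables (R : realType) (m : nat) (s : seq (constraint R m)).
Local Notation V := 'cV[R]_m.
Local Notation P := (wsol s).
Local Notation mid := (lerp 2^-1).

Lemma sol_mid u v : sol s u -> sol s v -> sol s (mid u v).
Proof. by move=> /sol_wsol su sv; apply: sol_lerp su sv; apply/andP; split; lra. Qed.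

Lemma wsol_mid u v : P u -> P v -> P (mid u v).
Proof. by move=> su sv; apply: wsol_lerp su sv; apply/andP; split; lra. Qed.

Lemma tight_mid c u v : c \in s -> P u -> P v ->
  tight c (mid u v) = tight c u && tight c v.
Proof.
move=> cs /allP su /allP sv.
by apply: tight_lerp; [apply/andP; split; lra | exact: su | exact: sv].
Qed.

(* The smallest face of P containing z. *)
Definition minface (z : V) : set V :=
  [set w | P w /\ {in s, forall c, tight c z -> tight c w}].

Lemma minface_id z : P z -> minface z z.
Proof. by split. Qed.

Lemma minface_subset z v : minface z v -> minface v `<=` minface z.
Proof. by move=> [_ zv] w [Pw vw]; split=> // c cs /(zv c cs); exact: vw. Qed.

Lemma minface_mid z u v : minface z u -> minface z v -> minface z (mid u v).
Proof.
move=> [Pu zu] [Pv zv]; split=> [|c cs tz]; first exact: wsol_mid.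
by rewrite tight_mid // zu ?zv.
Qed.

Lemma minface_mid_l z w : P z -> P w -> minface (mid z w) z.
Proof. by move=> Pz Pw; split=> // c cs; rewrite tight_mid // => /andP[]. Qed.

Lemma minface_mid_r z w : P z -> P w -> minface (mid z w) w.
Proof. by move=> Pz Pw; split=> // c cs; rewrite tight_mid // => /andP[]. Qed.

Lemma face_minface z : face P (minface z).
Proof.
exists (\sum_(c <- s | tight c z) c.1.1), (\sum_(c <- s | tight c z) c.1.2).
split=> [w /allP Pw|].
  rewrite dotv_suml big_seq_cond [X in _ <= X]big_seq_cond.
  by apply: ler_sum => c /andP[/Pw].
apply/seteqP; split=> w [Pw]; rewrite /= dotv_suml.
  move=> zw; split=> //; rewrite big_seq_cond [RHS]big_seq_cond.
  by apply: eq_bigr => c /andP[cs /(zw c cs)/eqP].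
move/allP: (Pw) => wP /esym/eqP; rewrite -subr_eq0 -sumrB big_seq_cond psumr_eq0.
  move=> /allP zw; split=> // c cs tz.
  by have := zw c cs; rewrite cs tz subr_eq0 eq_sym.
by move=> c /andP[/wP]; rewrite subr_ge0.
Qed.

Lemma relint_minface z : P z -> relint (minface z) z.
Proof.
move=> /[dup] Pz /allP wz; split; first exact: minface_id.
have slack : \forall y \near z, {in s, forall c, ~~ tight c z -> weakly_holds c y}.
  apply: (@near_all_in _ _ z s (fun c y => ~~ tight c z -> weakly_holds c y)) => c cs.
  have [tz | ntz] := boolP (tight c z).
    by near=> y => /negP[].
  have lt_z : dotv c.1.1 z < c.1.2.
    by rewrite lt_neqAle; apply/andP; split=> //; exact: wz.
  near=> y => _; apply/ltW; near: y.
  exact: cvgr_lt _ (@dotv_continuous _ _ c.1.1 z) _ lt_z.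
have /nbhs_ballP [e e0 ball_slack] := slack.
exists e; split=> // y Ay /ball_slack sy.
have zy : {in s, forall c, tight c z -> tight c y}.
  by move=> c cs tz; apply/eqP/(aff_hull_const _ Ay) => w [_ zw]; apply/eqP/zw.
split=> //; apply/allP => c cs; have [tz | ntz] := boolP (tight c z).
  by rewrite /weakly_holds (eqP (zy c cs tz)).
exact: sy.
Unshelve. all: by end_near. Qed.

Lemma relint_minface_tight z y :
  P z -> relint (minface z) y -> {in s, forall c, tight c y = tight c z}.
Proof.
move=> Pz ry c cs; have [[_ zy] _] := ry.
apply/idP/idP => [/eqP tyc | /(zy c cs) //].
apply/eqP/(relint_argmax _ ry tyc) => [w [/allP Pw _] | ]; [exact: Pw | exact: minface_id].
Qed.

Lemma sol_relint_minface z y : sol s z -> relint (minface z) y -> sol s y.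
Proof.
move=> /[dup] /sol_wsol Pz /allP sz ry; have [[/allP Py _] _] := ry.
apply/allP => c cs; have := sz c cs; have := Py c cs.
rewrite /holds /weakly_holds; case: c.2 => // wy zlt.
have := relint_minface_tight Pz ry cs.
by rewrite /tight (lt_eqF zlt) lt_neqAle wy andbT => ->.
Qed.

(* The empty face is the meet of two faces whose intersection misses sol s. *)
Definition minfaces : set (set V) :=
  [set F | F = set0 \/ exists2 z, sol s z & F = minface z].

Lemma minfaces_face F : minfaces F -> face P F.
Proof. by case=> [-> | [z _ ->]]; [exact: face_set0 | exact: face_minface]. Qed.

Lemma minfaces_mid F u v : minfaces F -> F u -> F v -> F (mid u v).
Proof. by case=> [-> // | [z _ ->]]; exact: minface_mid. Qed.

Lemma minfaces_sub F v : minfaces F -> F v -> minface v `<=` F.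
Proof. by case=> [-> // | [z _ ->]]; exact: minface_subset. Qed.

Lemma sol_bigcup_relint : sol s = \bigcup_(F in minfaces) relint F.
Proof.
apply/seteqP; split=> [y sy | y [F [-> | [z sz ->]]]].
- by exists (minface y); [right; exists y | exact/relint_minface/sol_wsol].
- by rewrite relint_set0.
- exact: sol_relint_minface.
Qed.

Lemma relint_minfaces_disjoint F G :
  minfaces F -> minfaces G -> F <> G -> relint F `&` relint G = set0.
Proof.
move=> [-> | [z sz ->]] [-> | [w sw ->]] FG; rewrite ?relint_set0 ?set0I ?setI0 //.
apply/seteqP; split=> // y [rz rw]; apply: FG.
have [Pz Pw] := (sol_wsol sz, sol_wsol sw).
have tzw c : c \in s -> tight c z = tight c w.
  by move=> cs; rewrite -(relint_minface_tight Pz rz cs) (relint_minface_tight Pw rw cs).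
by apply/seteqP; split; apply: minface_subset; split=> // c cs; rewrite tzw.
Qed.

Lemma minfaces_join F G : minfaces F -> minfaces G ->
  exists J, [/\ minfaces J, F `<=` J, G `<=` J &
    forall K, minfaces K -> F `<=` K -> G `<=` K -> J `<=` K].
Proof.
move=> mF [-> | [w sw ->]]; first by exists F; split=> // x [].
case: mF => [-> | [z sz ->]]; first by exists (minface w); split=> //; right; exists w.
have [Pz Pw] := (sol_wsol sz, sol_wsol sw).
exists (minface (mid z w)); split.
- by right; exists (mid z w) => //; exact: sol_mid.
- exact/minface_subset/minface_mid_l.
- exact/minface_subset/minface_mid_r.
- move=> K mK zK wK; apply: minfaces_sub => //.
  by apply: minfaces_mid => //; [apply: zK | apply: wK]; exact: minface_id.
Qed.

Lemma minfaces_meet F G : minfaces F -> minfaces G ->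
  exists M, [/\ minfaces M, M `<=` F, M `<=` G &
    forall K, minfaces K -> K `<=` F -> K `<=` G -> K `<=` M].
Proof.
move=> mF mG; pose S := [set v | [/\ sol s v, F v & G v]].
have [[v0 Sv0] | S0] := pselect (S !=set0); last first.
  exists set0; split=> //; first by left.
  move=> K [-> _ _ x [] | [v sv ->] KF KG]; have Pv := minface_id (sol_wsol sv).
  by exfalso; apply: S0; exists v; split; [| exact: KF | exact: KG].
have [v Sv vmin] :=
  exists_argmin_nat (fun v => count (fun c => tight c v) s) (ex_intro _ v0 Sv0).
have [sv Fv Gv] := Sv.
exists (minface v); split; [by right; exists v | exact: minfaces_sub | exact: minfaces_sub |].
move=> K [-> _ _ x [] | [v' sv' ->] KF KG]; have Pv' := minface_id (sol_wsol sv').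
have Su : S (mid v v').
  split; first exact: sol_mid.
    exact: minfaces_mid (KF _ Pv').
  exact: minfaces_mid (KG _ Pv').
have tight_vv' : {in s, (fun c => tight c (mid v v')) =1
                        predI (fun c => tight c v) (fun c => tight c v')}.
  by move=> c cs; rewrite /= tight_mid //; exact: sol_wsol.
have := vmin _ Su; rewrite /= (eq_in_count tight_vv') => /count_predI_subpred vv'.
by apply: minface_subset; split=> [|c]; [exact: sol_wsol | exact: vv'].
Qed.

End MinimalFaces.

Section Pullback.
Variable R : realType.

Definition pullback k n (A : 'M[R]_(k, n)) (t : 'cV[R]_k) (s : seq (constraint R k)) :
    seq (constraint R n) :=
  [seq (A^T *m c.1.1, c.1.2 - dotv c.1.1 t, c.2) | c <- s].

Lemma sol_pullback k n (A : 'M[R]_(k, n)) t s z :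
  sol (pullback A t s) z <-> sol s (A *m z + t).
Proof.
rewrite /sol /= all_map.
by under eq_all => c do rewrite /= /holds /= -dotv_mulmx ltrBrDr lerBrDr -dotvDr.
Qed.

End Pullback.

Section ReLUCode.
Variable R : realType.

Lemma relu_gt0 (t : R) : (0 < relu t) = (0 < t).
Proof. by rewrite /relu lt_max ltxx. Qed.

Lemma reluE (t : R) : relu t = (0 < t)%R%:R * t.
Proof. by rewrite /relu; case: ltP; rewrite (mul1r, mul0r). Qed.

Definition sign_constraint k (i : 'I_k) (b : bool) : constraint R k :=
  if b then (- delta_mx i 0, 0, true) else (delta_mx i 0, 0, false).

Lemma holds_sign_constraint k (i : 'I_k) b y :
  holds (sign_constraint i b) y = ((0 < y i 0) == b).
Proof.
by rewrite /holds; case: b; rewrite /= ?dotvNl dotv_delta ?oppr_lt0 ?leNgt;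
  case: (0 < y i 0).
Qed.

Definition sign_system k (d : 'I_k -> bool) : seq (constraint R k) :=
  [seq sign_constraint i (d i) | i <- enum 'I_k].

Lemma sol_sign_system k (d : 'I_k -> bool) y :
  sol (sign_system d) y <-> forall i, (0 < y i 0) = d i.
Proof.
rewrite /sol /= all_map; split=> [/allP yd i | yd].
  by apply/eqP; rewrite -holds_sign_constraint; exact: yd (mem_enum _ i).
by apply/allP => i _; rewrite /= holds_sign_constraint yd.
Qed.

Definition sign_diag k (d : 'I_k -> bool) : 'M[R]_k := diag_mx (\row_i (d i)%:R).

Lemma map_relu_sign k (y : 'cV[R]_k) (d : 'I_k -> bool) :
  (forall i, (0 < y i 0) = d i) -> map_mx (@relu R) y = sign_diag d *m y.
Proof. by move=> yd; apply/matrixP => i j; rewrite mul_diag_mx !mxE ord1 reluE yd. Qed.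

Lemma size_relu_code p n (f : relu_net R p n) x : size (relu_code f x) = neurons f.
Proof.
elim: f x => [//|n' k W b g IH] x /=.
by rewrite size_cat size_map size_enum_ord IH.
Qed.

Lemma relu_code_layerE p n k (W : 'M[R]_(k, n)) b (g : relu_net R p k) z x :
  relu_code (NetLayer W b g) z = relu_code (NetLayer W b g) x <->
  (forall i, (0 < (W *m z + b) i 0) = (0 < (W *m x + b) i 0)) /\
  relu_code g (map_mx (@relu R) (W *m z + b)) = relu_code g (map_mx (@relu R) (W *m x + b)).
Proof.
rewrite /=; split=> [/eqP | [sign_zx code_zx]].
  rewrite eqseq_cat ?size_map // => /andP[/eqP/eq_in_map sign_zx /eqP code_zx].
  by split=> // i; have := sign_zx i (mem_enum _ i); rewrite /= !mxE !relu_gt0.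
congr (_ ++ _) => //; apply/eq_in_map => i _.
by move: (sign_zx i); rewrite /= !mxE !relu_gt0.
Qed.

Lemma relu_code_sol p n (f : relu_net R p n) x :
  exists s : seq (constraint R n), forall z, relu_code f z = relu_code f x <-> sol s z.
Proof.
elim: f x => [n' xi | n' k W b g IH] x; first by exists [::].
pose d i := 0 < (W *m x + b) i 0.
have [s gs] := IH (map_mx (@relu R) (W *m x + b)).
exists (pullback W b (sign_system d ++ pullback (sign_diag d) 0 s)) => z.
rewrite relu_code_layerE sol_pullback sol_cat sol_sign_system sol_pullback addr0.
split=> [[sign_zx code_zx] | [sign_zx sz]]; split=> //.
  by rewrite -(map_relu_sign sign_zx); exact/gs.
by apply/gs; rewrite (map_relu_sign sign_zx).
Qed.

Lemma hamming_eq0 N (u v : seq bool) : size u = N -> size v = N ->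
  hamming N u v = 0%N <-> u = v.
Proof.
move=> <- sv; rewrite /hamming; split=> [/card0_eq uv | ->]; last first.
  by apply: eq_card0 => j; apply/negP => /set_mem /=; rewrite eqxx.
apply: (@eq_from_nth _ false) => [|i ilt]; first by rewrite sv.
apply/eqP/negP => ne; have := uv (Ordinal ilt); rewrite mem_set //; exact/negP.
Qed.

Lemma relu_equivE p n (f : relu_net R p n) z y :
  relu_equiv f z y <-> relu_code f z = relu_code f y.
Proof. by apply: hamming_eq0; rewrite size_relu_code. Qed.

Lemma relu_class_sol p n (f : relu_net R p n) x :
  exists s : seq (constraint R n), relu_class f x = sol s.
Proof.
have [s codeE] := relu_code_sol f x; exists s.
by apply/seteqP; split=> z; rewrite /relu_class /= relu_equivE codeE.
Qed.

Lemma relu_class_bij p n (f : relu_net R p n) :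
  set_bij (range (relu_code f)) (range (relu_class f))
    (fun c => [set z | hamming (neurons f) (relu_code f z) c = 0%N]).
Proof.
split.
- by move=> _ [x _ <-]; exists x.
- move=> _ _ /set_mem [x1 _ <-] /set_mem [x2 _ <-] E.
  have : relu_class f x1 x1 by exact/relu_equivE.
  by rewrite /relu_class /relu_equiv E => /relu_equivE.
- by move=> _ [x _ <-]; exists (relu_code f x) => //; exists x.
Qed.

End ReLUCode.

Theorem theorem1 (R : realType) (m p : nat) (f : relu_net R p m) :
  (* (1) code(x) |-> [x]_f is a bijection from the code space onto the classes *)
  set_bij (range (relu_code f)) (range (relu_class f))
    (fun c => [set z | hamming (neurons f) (relu_code f z) c = 0%N]) /\
  (forall x : 'cV[R]_m,
     (* (2) the closure of [x]_f is a polyhedron *)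
     polyhedron (closure (relu_class f x)) /\
     (* (3) [x]_f is a disjoint union of relative interiors of faces of
        P = closure [x]_f, and these faces form a lattice under inclusion *)
     exists FF : set (set 'cV[R]_m),
       (forall F, FF F -> face (closure (relu_class f x)) F) /\
       relu_class f x = \bigcup_(F in FF) relint F /\
       (forall F G, FF F -> FF G -> F <> G -> relint F `&` relint G = set0) /\
       (forall F G, FF F -> FF G ->
          (exists J, [/\ FF J, F `<=` J, G `<=` J &
             forall K, FF K -> F `<=` K -> G `<=` K -> J `<=` K]) /\
          (exists M, [/\ FF M, M `<=` F, M `<=` G &
             forall K, FF K -> K `<=` F -> K `<=` G -> K `<=` M]))).
Proof.
split; first exact: relu_class_bij.
move=> x; have [s class_sol] := relu_class_sol f x.
have sx : sol s x by rewrite -class_sol; exact/relu_equivE.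
rewrite class_sol (closure_sol sx).
split; first by apply: wsol_polyhedron; exists x; exact: sol_wsol.
exists (minfaces s); split; first exact: minfaces_face.
split; first exact: sol_bigcup_relint.
split; first exact: relint_minfaces_disjoint.
by move=> F G mF mG; split; [exact: minfaces_join | exact: minfaces_meet].
Qed.
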